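(* Let $c>0$, $0<\lambda\le T_M$, and let $f\in C^2(\mathbb R)$ solve $$f''(y)-cf'(y)-f^4(y)=-\int_{-\infty}^\infty E(y-\eta)f^4(\eta)\,d\eta\ (y\in\mathbb R),\qquad 0<\lambda\le f\le T_M.$$ Then $f$ does not attain its supremum nor its infimum over $\mathbb R$ at any point of $\mathbb R$, unless $f$ is constant.
   Context: $E(x)=\frac12\int_{|x|}^\infty\frac{e^{-t}}{t}dt$, which satisfies $\int_{\mathbb R}E=1$. *)

From HB Require Import structures.
From mathcomp Require Import all_boot all_order all_algebra.
From mathcomp Require Import all_classical all_reals all_analysis.
Set Implicit Arguments. Unset Strict Implicit. Unset Printing Implicit Defensive.
Import Order.TTheory GRing.Theory Num.Theory.
Import numFieldNormedType.Exports.
Local Open Scope classical_set_scope.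
Local Open Scope ring_scope.

(* E(x) = 1/2 * int_{|x|}^oo e^{-t}/t dt, an extended nonnegative real
   (E(0) = +oo). *)
Definition E (R : realType) (x : R) : \bar R :=
  ((2 : R)^-1)%:E *
  (\int[@lebesgue_measure R]_(t in [set t : R | (`|x| <= t)%R]) (expR (- t) / t)%R%:E)%E.

Definition C2 (R : realType) (f : R -> R) : Prop :=
  (forall x, derivable f x 1) /\ (forall x, derivable (derive1 f) x 1) /\
  continuous (derive1n 2 f).

Definition Econv (R : realType) (f : R -> R) (y : R) : \bar R :=
  (\int[@lebesgue_measure R]_(eta in [set: R]) (E (y - eta)%R * (f eta ^+ 4)%R%:E))%E.

(* [E] is a probability density: by Tonelli, [int E(y - eta) d eta = int_0^oo e^{-t} dt = 1].
   It is also bounded below by a positive constant on bounded sets, so [E * g] is a strict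
   weighted mean: if [g <= M] everywhere and [g < M] near some point, then [(E * g)(y) < M]
   for every [y], and symmetrically for lower bounds.  At a maximum [y0] of [f] we have
   [f'(y0) = 0] and [f''(y0) <= 0], so the equation gives
   [(E * f^4)(y0) = f(y0)^4 - f''(y0) >= f(y0)^4]; if [f] were not constant, the strict
   mean property would give [(E * f^4)(y0) < f(y0)^4]. *)

From HB Require Import structures.
From mathcomp Require Import all_boot all_order all_algebra.
From mathcomp Require Import all_classical all_reals all_analysis.
From mathcomp Require Import measurable_realfun.
From mathcomp Require Import ring lra.
Set Implicit Arguments. Unset Strict Implicit. Unset Printing Implicit Defensive.
Import Order.TTheory GRing.Theory Num.Theory.
Import numFieldNormedType.Exports.
Local Open Scope classical_set_scope.
Local Open Scope ring_scope.

Section kernel.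
Variable R : realType.
Notation mu := (@lebesgue_measure R).

Definition expNdiv : R -> R := (fun t => expR (- t) / t) \_ `]0, +oo[.

(* At [t = 0] both sides are [0], since [x / 0 = 0]. *)
Lemma expNdivE t : 0 <= t -> expNdiv t = expR (- t) / t.
Proof.
rewrite le_eqVlt => /orP[/eqP <-|t0].
  by rewrite /expNdiv patchE ifF ?invr0 ?mulr0 // memNset //= in_itv /= ltxx.
by rewrite /expNdiv patchE ifT // inE /= in_itv /= t0.
Qed.

Lemma expNdiv_ge0 t : 0 <= expNdiv t.
Proof.
rewrite /expNdiv patchE; case: ifPn => // /[!inE] /=; rewrite in_itv /= andbT.
by move=> t0; rewrite divr_ge0 ?expR_ge0 ?ltW.
Qed.

Lemma measurable_expNdiv : measurable_fun setT expNdiv.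
Proof.
apply/measurable_restrict => //; rewrite setTI.
apply: open_continuous_measurable_fun; first exact: interval_open.
move=> x; rewrite inE /= in_itv /= andbT => x0.
apply: (@continuousM _ R^o (fun t : R => expR (- t)) GRing.inv).
  by apply: continuous_comp; [exact: continuousN|exact: continuous_expR].
by apply: inv_continuous; rewrite gt_eqF.
Qed.

Definition E_cone (y : R) : set (R * R) := [set p | `|y - p.1| <= p.2].

Definition E_integrand (y : R) (p : R * R) : \bar R :=
  (\1_(E_cone y) p * expNdiv p.2)%:E.

Lemma measurable_E_cone y : measurable (E_cone y).
Proof.
have mh : measurable_fun setT (fun p : R * R => `|y - p.1| - p.2).
  apply: measurable_funB; last exact: measurable_snd.
  apply: measurableT_comp; first exact: normr_measurable.
  exact: measurable_funB measurable_fst.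
have := mh measurableT `]-oo, 0]%classic (measurable_itv _).
by rewrite setTI; congr measurable; apply/seteqP; split => p /=;
  rewrite in_itv /= subr_le0.
Qed.

Lemma measurable_E_integrand y : measurable_fun setT (E_integrand y).
Proof.
apply/measurable_EFinP; apply: measurable_funM.
  exact: measurable_indic (measurable_E_cone y).
exact: measurableT_comp measurable_expNdiv measurable_snd.
Qed.

Lemma E_integrand_ge0 y p : (0 <= E_integrand y p)%E.
Proof. by rewrite lee_fin mulr_ge0 ?expNdiv_ge0. Qed.

Lemma E_fubini_F (y eta : R) :
  E (y - eta) = ((2 : R)^-1%:E * fubini_F mu (E_integrand y) eta)%E.
Proof.
rewrite /E integral_mkcond /fubini_F; congr (_ * _)%E.
apply: eq_integral => t _; rewrite patchE /E_integrand indicE /E_cone.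
case: ifPn => [/[!inE] /= yt|yt].
  by rewrite mem_set //= mul1r expNdivE // (le_trans _ yt).
by rewrite memNset ?mul0r //; apply: contraNnot yt; rewrite inE.
Qed.

Lemma measurable_E_fubini_F (y : R) : measurable_fun setT (fubini_F mu (E_integrand y)).
Proof.
apply: measurable_fun_fubini_tonelli_F; [exact: measurable_E_integrand|exact: E_integrand_ge0].
Qed.

Definition twice_expN : R -> R := (fun t => 2 * expR (- t)) \_ `]0, +oo[.

Lemma E_fubini_G y t : fubini_G mu (E_integrand y) t = (twice_expN t)%:E.
Proof.
rewrite /fubini_G /twice_expN /E_integrand patchE /=.
have [t0|t0] := ltP 0 t; last first.
  have tout : ~ `]0, +oo[%classic t.
    by rewrite /= in_itv /= andbT; apply/negP; rewrite -leNgt.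
  rewrite memNset // /expNdiv patchE memNset //.
  by under eq_integral do rewrite mulr0; exact: integral0.
rewrite mem_set; last by rewrite /= in_itv /= andbT.
transitivity (\int[mu]_x ((expNdiv t)%:E * (\1_(`[y - t, y + t]) x)%:E))%E.
  apply: eq_integral => x _; rewrite -EFinM mulrC !indicE /E_cone.
  congr (_ * (GRing.natmul _ (nat_of_bool _)))%:E.
  by apply/idP/idP; rewrite !inE /= in_itv /= distrC ler_distl.
rewrite ge0_integralZl_EFin ?expNdiv_ge0 //; last exact/measurable_EFinP.
rewrite integral_indic // setIT -closed_ball_itv //.
rewrite [X in (_ * X)%E](lebesgue_measure_closed_ball _ (ltW t0)).
by rewrite -EFinM expNdivE ?ltW //; congr _%:E; field; lra.
Qed.

Lemma integral_twice_expN : (\int[mu]_t (twice_expN t)%:E = 2%:E)%E.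
Proof.
transitivity (\int[mu]_(t in `]0%R, +oo[%classic) (2 * expR (- t))%:E)%E.
  rewrite [RHS]integral_mkcond; apply: eq_integral => t _.
  by rewrite /twice_expN !patchE; case: (t \in _).
rewrite integral_itv_obnd_cbnd; last first.
  apply/measurable_EFinP; apply: measurable_funM => //.
  by apply: measurableT_comp; [exact: measurable_expR|exact: measurable_funN].
transitivity (\int[mu]_t (2 * exponential_pdf 1 t)%:E)%E.
  rewrite integral_mkcond; apply: eq_integral => t _; rewrite /exponential_pdf !patchE.
  by case: ifPn => _; rewrite ?mul1r ?mulN1r ?mulr0.
under eq_integral do rewrite EFinM.
rewrite ge0_integralZl_EFin //.
- by rewrite integral_exponential_pdf // mule1.
- by move=> t _; rewrite lee_fin exponential_pdf_ge0.
- by apply/measurable_EFinP; exact: measurable_exponential_pdf.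
Qed.

Lemma E_ge0 (x : R) : (0 <= E x)%E.
Proof.
rewrite /E mule_ge0 // ?lee_fin ?invr_ge0 //; apply: integral_ge0 => t /= xt.
by rewrite lee_fin divr_ge0 ?expR_ge0 // (le_trans _ xt).
Qed.

Lemma measurable_E_shift (y : R) : measurable_fun setT (fun eta : R => E (y - eta)).
Proof.
under eq_fun do rewrite E_fubini_F.
apply: emeasurable_funM => //.
exact: measurable_E_fubini_F.
Qed.

Lemma integral_E_shift (y : R) : (\int[mu]_eta E (y - eta) = 1)%E.
Proof.
under eq_integral do rewrite E_fubini_F.
rewrite ge0_integralZl_EFin //; last 2 first.
- by move=> x _; apply: integral_ge0 => t _; exact: E_integrand_ge0.
- exact: measurable_E_fubini_F.
rewrite /fubini_F fubini_tonelli; [|exact: measurable_E_integrand|exact: E_integrand_ge0].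
under eq_integral do rewrite -/(fubini_G mu (E_integrand y) _) E_fubini_G.
by rewrite integral_twice_expN -EFinM mulVf.
Qed.

(* The witness is half the minimum of [e^{-t}/t] on [[K', K' + 1]], with [K' = |K| + 1]. *)
Lemma E_bounded_below (K : R) :
  exists2 k : R, 0 < k & forall x, `|x| <= K -> (k%:E <= E x)%E.
Proof.
pose K' : R := `|K| + 1; have K'0 : 0 < K' by rewrite ltr_pwDr.
exists (2^-1 * (expR (- (K' + 1)) / (K' + 1))).
  by rewrite mulr_gt0 ?invr_gt0 // divr_gt0 ?expR_gt0 // addr_gt0.
move=> x xK; rewrite /E EFinM; apply: lee_wpmul2l; first by rewrite lee_fin invr_ge0.
have xK' : `|x| <= K' by rewrite (le_trans xK) // (le_trans (ler_norm K)) // lerDl.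
have mf : measurable_fun [set t : R | `|x| <= t] (fun t => (expR (- t) / t)%:E).
  apply: (eq_measurable_fun (EFin \o expNdiv)).
    by move=> t /[!inE] /= xt; rewrite expNdivE // (le_trans _ xt).
  by apply/measurable_EFinP; apply: measurable_funTS; exact: measurable_expNdiv.
have sub : `[K', K' + 1] `<=` [set t : R | `|x| <= t].
  by move=> t /=; rewrite in_itv /= => /andP[Kt _]; exact: le_trans xK' Kt.
have mB : measurable [set t : R | `|x| <= t].
  rewrite (_ : [set t | _] = `[`|x|, +oo[%classic); first exact: measurable_itv.
  by apply/seteqP; split => t /=; rewrite in_itv /= andbT.
have f0 t : `|x| <= t -> (0 <= (expR (- t) / t)%:E)%E.
  by move=> xt; rewrite lee_fin divr_ge0 ?expR_ge0 // (le_trans _ xt).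
apply: le_trans (ge0_subset_integral mu (measurable_itv _) mB mf f0 sub).
rewrite -[X in (X <= _)%E]mule1.
have <- : mu `[K', K' + 1] = 1%E.
  apply: eq_trans (lebesgue_measure_itv _) _.
  by rewrite /= lte_fin ltrDl ltr01 -EFinD addrAC subrr add0r.
rewrite -integral_cst //; apply: ge0_le_integral => //.
- by move=> t _; rewrite lee_fin divr_ge0 ?expR_ge0 // addr_ge0 // ltW.
- exact: measurable_funS mf.
move=> t /=; rewrite in_itv /= => /andP[Kt tK].
have t0 : 0 < t by exact: lt_le_trans Kt.
rewrite lee_fin; apply: ler_pM; rewrite ?expR_ge0 ?invr_ge0 ?(addr_ge0 (ltW K'0)) //.
  by rewrite ler_expR lerN2.
by rewrite lef_pV2 // posrE // addr_gt0.
Qed.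

End kernel.

Section kernel_mean.
Variable R : realType.
Notation mu := (@lebesgue_measure R).

Definition Emean (g : R -> R) (y : R) : \bar R :=
  \int[mu]_eta (E (y - eta) * (g eta)%:E).

Lemma measurable_Emean_integrand (g : R -> R) (y : R) : measurable_fun setT g ->
  measurable_fun setT (fun eta : R => E (y - eta) * (g eta)%:E)%E.
Proof.
move=> mg; apply: emeasurable_funM; first exact: measurable_E_shift.
exact/measurable_EFinP.
Qed.

Lemma Emean_cst (a y : R) : 0 <= a -> Emean (cst a) y = a%:E.
Proof.
move=> a0; rewrite /Emean; under eq_integral do rewrite muleC.
rewrite ge0_integralZl_EFin //; first by rewrite integral_E_shift mule1.
- by move=> x _; exact: E_ge0.
- exact: measurable_E_shift.
Qed.

Lemma EmeanD (g h : R -> R) (y : R) :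
  measurable_fun setT g -> measurable_fun setT h ->
  (forall x, 0 <= g x) -> (forall x, 0 <= h x) ->
  Emean (g \+ h) y = (Emean g y + Emean h y)%E.
Proof.
move=> mg mh g0 h0; rewrite /Emean -ge0_integralD //; last 4 first.
- by move=> x _; rewrite mule_ge0 ?E_ge0 ?lee_fin.
- exact: measurable_Emean_integrand.
- by move=> x _; rewrite mule_ge0 ?E_ge0 ?lee_fin.
- exact: measurable_Emean_integrand.
by apply: eq_integral => x _; rewrite EFinD ge0_muleDr // lee_fin.
Qed.

Lemma le_Emean (g h : R -> R) (y : R) :
  measurable_fun setT g -> measurable_fun setT h ->
  (forall x, 0 <= g x) -> (forall x, g x <= h x) -> (Emean g y <= Emean h y)%E.
Proof.
move=> mg mh g0 gh; apply: ge0_le_integral => //.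
- by move=> x _; rewrite mule_ge0 ?E_ge0 ?lee_fin.
- exact: measurable_Emean_integrand.
- exact: measurable_Emean_integrand.
- by move=> x _; apply: lee_wpmul2l; rewrite ?E_ge0 ?lee_fin.
Qed.

Lemma Emean_indic_ge (B : set R) (d k y : R) : measurable B -> 0 <= d -> 0 <= k ->
  (forall x, B x -> (k%:E <= E (y - x))%E) ->
  ((k * d)%:E * mu B <= Emean (fun x => d * \1_B x)%R y)%E.
Proof.
move=> mB d0 k0 kB.
have mdB : measurable_fun setT (fun x => d * \1_B x).
  by apply: measurable_funM => //; exact: measurable_indic.
have -> : ((k * d)%:E * mu B = \int[mu]_x ((k * d)%:E * (\1_B x)%:E))%E.
  rewrite ge0_integralZl_EFin ?integral_indic ?setIT ?mulr_ge0 //.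
  by apply/measurable_EFinP; exact: measurable_indic.
apply: ge0_le_integral => //.
- by move=> x _; rewrite -EFinM lee_fin !mulr_ge0.
- by apply/measurable_EFinP; apply: measurable_funM => //; exact: measurable_indic.
- exact: measurable_Emean_integrand.
move=> x _; rewrite indicE; have [xB|xB] := boolP (x \in B).
  rewrite !mulr1 mule1 EFinM; apply: lee_wpmul2r; first by rewrite lee_fin.
  by apply: kB; rewrite inE in xB.
by rewrite !mulr0 !mule0.
Qed.

(* [E] is bounded below on bounded sets, so a gap [d] on a ball of radius [r] costs a
   definite amount [k d (2 r)] of the weighted mean. *)
Lemma Emean_lt_of_gap (g h : R -> R) (y z r d : R) :
  measurable_fun setT g -> measurable_fun setT h ->
  (forall x, 0 <= g x) -> (forall x, g x <= h x) -> 0 < r -> 0 < d ->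
  (forall x, `|z - x| < r -> g x + d <= h x) ->
  exists2 delta : R, 0 < delta & (Emean g y + delta%:E <= Emean h y)%E.
Proof.
move=> mg mh g0 gh r0 d0 gdh.
have [k k0 kE] := E_bounded_below (`|y - z| + r).
have kB x : ball z r x -> (k%:E <= E (y - x))%E.
  move=> /= zx; apply: kE; rewrite (le_trans (ler_distD z _ _)) // lerD2l.
  exact: ltW.
have mdB : measurable_fun setT (fun x => d * \1_(ball z r) x).
  by apply: measurable_funM => //; apply: measurable_indic; exact: measurable_ball.
exists (k * d * (r *+ 2)); first by rewrite !mulr_gt0 // mulrn_wgt0.
have gdBh : (Emean (g \+ fun x => d * \1_(ball z r) x)%R y <= Emean h y)%E.
  apply: le_Emean => // [|x|x]; first exact: measurable_funD.
  - by apply: addr_ge0 => //; apply: mulr_ge0; [exact: ltW|rewrite indicE].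
  - rewrite /= indicE; have [zx|zx] := ltP `|z - x| r.
      by rewrite mem_set // mulr1; exact: gdh.
    rewrite memNset ?mulr0 ?addr0 //.
    by rewrite /ball /= ltNge zx.
apply: le_trans gdBh.
rewrite EmeanD //; last by move=> x; apply: mulr_ge0; [exact: ltW|rewrite indicE].
apply: leeD => //.
have := Emean_indic_ge (measurable_ball z r) (ltW d0) (ltW k0) kB.
by rewrite [X in (_ * X)%E](lebesgue_measure_ball _ (ltW r0)) -EFinM.
Qed.

End kernel_mean.

Section calculus.
Variable R : realType.

Lemma continuous_lt_gap (h : R -> R) (z a : R) : {for z, continuous h} -> h z < a ->
  exists r d : R, [/\ 0 < r, 0 < d & forall x, `|z - x| < r -> h x + d <= a].
Proof.
move=> hz hza; pose d := (a - h z) / 2.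
have hzd : h z < h z + d by rewrite ltrDl divr_gt0 // subr_gt0.
have [r /= r0 hr] := iffLR (nbhs_ballP _ _) (cvgr_lt _ hz _ hzd).
exists r, d; split => //; first by rewrite divr_gt0 // subr_gt0.
move=> x zx; have := hr x zx; rewrite /d /=; lra.
Qed.

Lemma continuous_gt_gap (h : R -> R) (z a : R) : {for z, continuous h} -> a < h z ->
  exists r d : R, [/\ 0 < r, 0 < d & forall x, `|z - x| < r -> a + d <= h x].
Proof.
move=> hz ahz; have := @continuous_lt_gap (- h) z (- a) (cvgN hz).
rewrite /= ltrN2 => /(_ _ ahz) [r [d [r0 d0 hr]]].
exists r, d; split => // x /hr; rewrite fctE; lra.
Qed.

Lemma derive1_eq0_at_max (f : R -> R) (y0 : R) :
  (forall x, derivable f x 1) -> (forall y, f y <= f y0) -> derive1 f y0 = 0.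
Proof.
move=> df fmax; rewrite derive1E; apply: derive_val.
apply: (@derive1_at_max _ f (y0 - 1) (y0 + 1)) => //.
- lra.
- by rewrite in_itv /=; apply/andP; split; lra.
Qed.

Lemma derive1_eq0_at_min (f : R -> R) (y0 : R) :
  (forall x, derivable f x 1) -> (forall y, f y0 <= f y) -> derive1 f y0 = 0.
Proof.
move=> df fmin; rewrite derive1E; apply: derive_val.
apply: (@derive1_at_min _ f (y0 - 1) (y0 + 1)) => //.
- lra.
- by rewrite in_itv /=; apply/andP; split; lra.
Qed.

Lemma derive2_le0_at_max (f : R -> R) (y0 : R) :
  (forall x, derivable f x 1) -> (forall x, derivable (derive1 f) x 1) ->
  {for y0, continuous (derive1 (derive1 f))} ->
  (forall y, f y <= f y0) -> derive1 (derive1 f) y0 <= 0.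
Proof.
move=> df ddf cf2 fmax; rewrite leNgt; apply/negP => f2pos.
have f1 := derive1_eq0_at_max df fmax.
have [d /= d0 hd] := iffLR (nbhs_ballP _ _) (cvgr_gt _ cf2 _ f2pos).
pose e := d / 2; have e0 : 0 < e by rewrite divr_gt0.
have f2_gt0 x : x \in `]y0, y0 + e[ -> 0 < derive1 (derive1 f) x.
  rewrite in_itv /= => /andP[y0x xe]; apply: hd; rewrite /ball /= distrC ger0_norm.
    by rewrite /e in xe; lra.
  by rewrite subr_ge0; exact: ltW.
have f1_gt0 x : x \in `]y0, y0 + e[ -> 0 < derive1 f x.
  rewrite in_itv /= => /andP[y0x xe]; rewrite -f1.
  exact: (gtr0_derive1_incr (fun x _ => ddf x) f2_gt0
    (derivable_within_continuous (fun x _ => ddf x)) (lexx y0) y0x (ltW xe)).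
have := gtr0_derive1_incr (fun x _ => df x) f1_gt0
  (derivable_within_continuous (fun x _ => df x)) (lexx _) _ (lexx _).
by move=> /(_ (ltr_pwDr e0 (lexx _))); rewrite ltNge fmax.
Qed.

Lemma derive2_ge0_at_min (f : R -> R) (y0 : R) :
  (forall x, derivable f x 1) -> (forall x, derivable (derive1 f) x 1) ->
  {for y0, continuous (derive1 (derive1 f))} ->
  (forall y, f y0 <= f y) -> 0 <= derive1 (derive1 f) y0.
Proof.
move=> df ddf cf2 fmin.
have dfN : derive1 (- f) = - derive1 f.
  by apply/funext => x; exact: derive1N (df x).
have ddfN : derive1 (derive1 (- f)) = - derive1 (derive1 f).
  by rewrite dfN; apply/funext => x; exact: derive1N (ddf x).
have dNf x : derivable (- f) x 1 := derivableN (df x).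
have ddNf x : derivable (derive1 (- f)) x 1 by rewrite dfN; exact: derivableN (ddf x).
have cNf2 : {for y0, continuous (derive1 (derive1 (- f)))} by rewrite ddfN; exact: cvgN cf2.
have Nfmax y : (- f) y <= (- f) y0 by rewrite !fctE lerN2.
by have := derive2_le0_at_max dNf ddNf cNf2 Nfmax; rewrite ddfN fctE oppr_le0.
Qed.

End calculus.

Section extremum.
Variables (R : realType) (c : R) (f : R -> R).
Hypothesis df : forall x, derivable f x 1.
Hypothesis ddf : forall x, derivable (derive1 f) x 1.
Hypothesis cf2 : continuous (derive1n 2 f).
Hypothesis ode : forall y,
  ((derive1n 2 f y - c * derive1 f y - f y ^+ 4)%:E = - Econv f y)%E.
Hypothesis f_gt0 : forall y, 0 < f y.

Let f4 x := f x ^+ 4.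

Let continuous_f4 : continuous f4.
Proof.
move=> x; apply: (@continuous_comp _ _ _ f (fun y => y ^+ 4)); last first.
  exact: exprn_continuous.
by apply: differentiable_continuous; apply/derivable1_diffP.
Qed.

Let measurable_f4 : measurable_fun setT f4.
Proof. exact: continuous_measurable_fun continuous_f4. Qed.

Let f4_ge0 x : 0 <= f4 x.
Proof. by rewrite exprn_ge0 // ltW. Qed.

Lemma Econv_at_critical y0 : derive1 f y0 = 0 ->
  Econv f y0 = (f y0 ^+ 4 - derive1 (derive1 f) y0)%:E.
Proof.
move=> f1; have := ode y0; rewrite f1 mulr0 subr0 => ode_y0.
by rewrite -[Econv f y0]oppeK -ode_y0 -EFinN opprB.
Qed.

Lemma const_of_max y0 : (forall y, f y <= f y0) -> forall z, f z = f y0.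
Proof.
move=> fmax z; apply/eqP; rewrite eq_le fmax leNgt; apply/negP => fz.
have f4z : f4 z < f y0 ^+ 4 by rewrite ltrXn2r // ltW.
have [r [d [r0 d0 gap]]] := continuous_lt_gap (@continuous_f4 z) f4z.
have f4_le x : f4 x <= f y0 ^+ 4.
  by apply: lerXn2r => //; rewrite nnegrE ltW.
have [delta delta0] := Emean_lt_of_gap y0 measurable_f4
  (measurable_cst (f y0 ^+ 4)) f4_ge0 f4_le r0 d0 gap.
rewrite Emean_cst ?f4_ge0 //; change (Emean f4 y0) with (Econv f y0).
rewrite (Econv_at_critical (derive1_eq0_at_max df fmax)) -EFinD lee_fin.
by have := derive2_le0_at_max df ddf (@cf2 y0) fmax; lra.
Qed.

Lemma const_of_min y0 : (forall y, f y0 <= f y) -> forall z, f z = f y0.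
Proof.
move=> fmin z; apply/eqP; rewrite eq_le fmin andbT leNgt; apply/negP => fz.
have f4z : f y0 ^+ 4 < f4 z by rewrite ltrXn2r // ltW.
have [r [d [r0 d0 gap]]] := continuous_gt_gap (@continuous_f4 z) f4z.
have f4_ge x : f y0 ^+ 4 <= f4 x.
  by apply: lerXn2r => //; rewrite nnegrE ltW.
have [delta delta0] := Emean_lt_of_gap y0 (measurable_cst (f y0 ^+ 4)) measurable_f4
  (fun=> f4_ge0 y0) f4_ge r0 d0 gap.
rewrite Emean_cst ?f4_ge0 //; change (Emean f4 y0) with (Econv f y0).
rewrite (Econv_at_critical (derive1_eq0_at_min df fmin)) -EFinD lee_fin.
by have := derive2_ge0_at_min df ddf (@cf2 y0) fmin; lra.
Qed.

End extremum.

Theorem lemma3p1 (R : realType) (c lambda T_M : R) (f : R -> R) :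
  0 < c -> 0 < lambda -> lambda <= T_M ->
  C2 f ->
  (forall y : R, ((derive1n 2 f y - c * derive1 f y - f y ^+ 4)%:E = - Econv f y)%E) ->
  (forall y : R, lambda <= f y <= T_M) ->
  ((exists y0 : R, forall y : R, f y <= f y0) \/
   (exists y0 : R, forall y : R, f y0 <= f y)) ->
  forall x y : R, f x = f y.
Proof.
(* [f'] vanishes at an extremum. *)
move=> _ lambda_gt0 _ [df [ddf cf2]] ode bnd extremum x y.
have f_gt0 z : 0 < f z by case/andP: (bnd z) => /(lt_le_trans lambda_gt0).
case: extremum => [[y0 fmax]|[y0 fmin]].
- by have const := const_of_max df ddf cf2 ode f_gt0 fmax; rewrite !const.
- by have const := const_of_min df ddf cf2 ode f_gt0 fmin; rewrite !const.
Qed.
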